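(* Let $R$ be a principal ideal domain and let $a\in R$ be a nonzero non-unit. Then the left ideal $Ra$ is structurally prime if and only if $a$ is left totally unbounded or $a$ is a factor of an Inv-atom.
   Context: A principal ideal domain (PID) is a (not necessarily commutative) domain in which every left ideal and every right ideal is principal. A left ideal $\mathfrak{p}$ is structurally prime if $\mathfrak{p}\neq R$ and, for left ideals $A,B$, $AB\subseteq\mathfrak{p}$ implies $A\subseteq\mathfrak{p}$ or $B\subseteq\mathfrak{p}$. A nonzero $c$ is invariant if $Rc=cR$. An Inv-atom is an invariant non-unit $p$ such that $p=bc$ with $b,c$ invariant implies $b$ or $c$ is a unit. $a$ is a factor of $p$ if $p=ras$ for some $r,s\in R$; $a$ is a left factor of $b$ if $b\in aR$. An element $p$ is bounded if $Rp$ contains a nonzero two-sided ideal. A nonzero non-unit is left totally unbounded if it has no non-unit bounded left factors. *)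

From mathcomp Require Import all_boot all_algebra.
Set Implicit Arguments. Unset Strict Implicit. Unset Printing Implicit Defensive.
Import GRing.Theory.
Local Open Scope ring_scope.

Section Defs.
Variable R : nzRingType.

Definition is_unit (x : R) : Prop := exists y : R, x * y = 1 /\ y * x = 1.

(* no zero divisors (R is nontrivial since nzRingType) *)
Definition is_domain : Prop := forall x y : R, x * y = 0 -> x = 0 \/ y = 0.

Definition is_left_ideal (I : R -> Prop) : Prop :=
  [/\ I 0, (forall x y, I x -> I y -> I (x + y)),
      (forall x, I x -> I (- x)) & (forall r x, I x -> I (r * x))].

Definition is_right_ideal (I : R -> Prop) : Prop :=
  [/\ I 0, (forall x y, I x -> I y -> I (x + y)),
      (forall x, I x -> I (- x)) & (forall r x, I x -> I (x * r))].

Definition is_twosided_ideal (I : R -> Prop) : Prop :=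
  is_left_ideal I /\ (forall r x, I x -> I (x * r)).

Definition lmul_set (a : R) : R -> Prop := fun x => exists r : R, x = r * a.
Definition rmul_set (a : R) : R -> Prop := fun x => exists r : R, x = a * r.

Definition set_sub (A B : R -> Prop) : Prop := forall x, A x -> B x.
Definition set_eq (A B : R -> Prop) : Prop := forall x, A x <-> B x.

Definition is_PID : Prop :=
  [/\ is_domain,
      (forall I, is_left_ideal I -> exists a, set_eq I (lmul_set a))
    & (forall I, is_right_ideal I -> exists a, set_eq I (rmul_set a))].

Definition ideal_prod (A B : R -> Prop) : R -> Prop :=
  fun x => exists s : seq (R * R),
    (forall i, (i < size s)%N -> A (nth (0, 0) s i).1 /\ B (nth (0, 0) s i).2) /\
    x = \sum_(p <- s) p.1 * p.2.

Definition structurally_prime (P : R -> Prop) : Prop :=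
  (~ set_eq P (fun _ => True)) /\
  (forall A B, is_left_ideal A -> is_left_ideal B ->
     set_sub (ideal_prod A B) P -> set_sub A P \/ set_sub B P).

Definition invariant (c : R) : Prop := c <> 0 /\ set_eq (lmul_set c) (rmul_set c).

Definition inv_atom (p : R) : Prop :=
  [/\ invariant p, ~ is_unit p &
      forall b c, invariant b -> invariant c -> p = b * c -> is_unit b \/ is_unit c].

Definition is_factor (a p : R) : Prop := exists r s : R, p = r * a * s.

Definition left_factor (a b : R) : Prop := rmul_set a b.

Definition bounded (p : R) : Prop :=
  exists I, [/\ is_twosided_ideal I, (exists x, I x /\ x <> 0) & set_sub I (lmul_set p)].

Definition left_totally_unbounded (a : R) : Prop :=
  [/\ a <> 0, ~ is_unit a &
      forall b, left_factor b a -> ~ is_unit b -> ~ bounded b].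

End Defs.

From Pilot Require Import Defs.
From mathcomp Require Import all_boot all_algebra.
From Stdlib Require Import Classical.
Set Implicit Arguments. Unset Strict Implicit.
Import GRing.Theory.
Local Open Scope ring_scope.

(* [Ra] is structurally prime iff [bRc ⊆ Ra] forces [b ∈ Ra] or [c ∈ Ra], and the
   [b] with [bRc ⊆ Ra] form a two-sided ideal [colon a c].  In a PID a nonzero
   two-sided ideal is [Rq = qR] with [q] invariant.  If [Ra] is prime and a non-unit left
   factor [y] of [a = yx] is bounded, primality moves the bound of [y] into [Ra], so the
   largest two-sided ideal [colon a 1] inside [Ra] is a nonzero [Rq], and primality makes
   [q] an Inv-atom.  Conversely, if [a] is left totally unbounded, write [Ra + Rc = Rx]
   and [a = yx]: then [colon a c ⊆ Ry], so [colon a c] vanishes unless [y] is a unit, in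
   which case [c ∈ Ra].  If [a] is a factor of an Inv-atom [p], then [p ∈ colon a c = Rq];
   atomicity of [p = tq] makes [q] a unit (so [c ∈ Ra]) or [colon a c = Rp ⊆ Ra]. *)

Section Colon.
Variable R : nzRingType.
Implicit Types a c z : R.

Definition colon a c : R -> Prop := fun z => forall r, lmul_set a (z * r * c).

Lemma lmul_set_left_ideal a : is_left_ideal (lmul_set a).
Proof.
split.
- by exists 0; rewrite mul0r.
- by move=> x y [r1 ->] [r2 ->]; exists (r1 + r2); rewrite mulrDl.
- by move=> x [r1 ->]; exists (- r1); rewrite mulNr.
- by move=> r x [r1 ->]; exists (r * r1); rewrite mulrA.
Qed.

Lemma colon_twosided a c : is_twosided_ideal (colon a c).
Proof.
split; [split|].
- by move=> r; exists 0; rewrite !mul0r.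
- move=> z1 z2 h1 h2 r; have [r1 e1] := h1 r; have [r2 e2] := h2 r.
  by exists (r1 + r2); rewrite !mulrDl e1 e2.
- by move=> z h r; have [r1 e1] := h r; exists (- r1); rewrite !mulNr e1.
- move=> s z h r; have [r1 e1] := h r.
  by exists (s * r1); rewrite -(mulrA s) -(mulrA s) e1 mulrA.
- by move=> s z h r; rewrite -(mulrA z); exact: h.
Qed.

Lemma left_ideal_sum (I : R -> Prop) (s : seq (R * R)) : is_left_ideal I ->
  (forall i, (i < size s)%N -> I ((nth (0, 0) s i).1 * (nth (0, 0) s i).2)) ->
  I (\sum_(q <- s) q.1 * q.2).
Proof.
case=> I0 IaddI _ _; elim: s => [|q s IH] Hs; first by rewrite big_nil.
by rewrite big_cons; apply: IaddI; [exact: (Hs 0%N) | apply: IH => i /(Hs i.+1)].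
Qed.

Lemma structurally_primeP a : ~ lmul_set a 1 ->
  structurally_prime (lmul_set a) <->
  (forall b c, colon a c b -> lmul_set a b \/ lmul_set a c).
Proof.
move=> a1; split => [[_ SP] b c Hbc | E].
  have [||] := SP _ _ (lmul_set_left_ideal b) (lmul_set_left_ideal c).
  - move=> x [s [Hs ->]]; apply: left_ideal_sum (lmul_set_left_ideal a) _.
    move=> i /Hs [[u ->] [v ->]]; have [t Ht] := Hbc v.
    by exists (u * t); rewrite -mulrA (mulrA b) Ht mulrA.
  - by move=> S; left; apply: S; exists 1; rewrite mul1r.
  - by move=> S; right; apply: S; exists 1; rewrite mul1r.
split=> [H | A B HA HB AB]; first by apply: a1; apply: (H 1).2.
apply: NNPP => /not_or_and [nAa nBa].
have [b Hb] := not_all_ex_not _ _ nAa.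
have [Ab nb] := imply_to_and _ _ Hb.
have [c Hc] := not_all_ex_not _ _ nBa.
have [Bc nc] := imply_to_and _ _ Hc.
have [] // := E b c; move=> r; apply: AB; exists [:: (b, r * c)]; split.
- by case=> //= _; split => //; case: HB => _ _ _; apply.
- by rewrite big_seq1 /= mulrA.
Qed.

Lemma invariant_commute_l c u : Defs.invariant c -> exists v, u * c = c * v.
Proof. by case=> _ Ec; apply: (Ec _).1; exists u. Qed.

Lemma invariant_commute_r c u : Defs.invariant c -> exists v, c * u = v * c.
Proof. by case=> _ Ec; apply: (Ec _).2; exists u. Qed.

Lemma invariant_colon1 a z : Defs.invariant z -> lmul_set a z -> colon a 1 z.
Proof.
move=> Hz [t zta] r; have [u hu] := invariant_commute_r r Hz.
by exists (u * t); rewrite mulr1 hu zta mulrA.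
Qed.

End Colon.

Section Domain.
Variables (R : nzRingType) (HD : is_domain R).
Implicit Types a p q t x y z : R.

Lemma dom_mulIf x y z : x <> 0 -> y * x = z * x -> y = z.
Proof.
move=> x0 e; have : (y - z) * x = 0 by rewrite mulrBl e subrr.
by case/HD => // /eqP; rewrite subr_eq0 => /eqP.
Qed.

Lemma dom_mulfI x y z : x <> 0 -> x * y = x * z -> y = z.
Proof.
move=> x0 e; have : x * (y - z) = 0 by rewrite mulrBr e subrr.
by case/HD => // /eqP; rewrite subr_eq0 => /eqP.
Qed.

Lemma dom_mulr1C x y : x * y = 1 -> y * x = 1.
Proof.
move=> e; have y0 : y <> 0.
  by move=> y0; move: e; rewrite y0 mulr0 => /esym/eqP; rewrite oner_eq0.
by apply: (dom_mulIf y0); rewrite -mulrA e mulr1 mul1r.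
Qed.

Lemma dom_unit_r x y : x * y = 1 -> is_unit y.
Proof. by move=> e; exists x; split => //; exact: dom_mulr1C. Qed.

Lemma dom_lmul_set1 a : ~ is_unit a -> ~ lmul_set a 1.
Proof. by move=> au [r /esym/dom_unit_r]. Qed.

Lemma invariant_ldivisor p q t :
  Defs.invariant p -> Defs.invariant q -> p = t * q -> Defs.invariant t.
Proof.
move=> Hp Hq ptq; have q0 := Hq.1.
split=> [t0 | z]; first by apply: Hp.1; rewrite ptq t0 mul0r.
split=> [[u ->] | [u ->]].
- have [v hv] := invariant_commute_l u Hp.
  have [w hw] := invariant_commute_r v Hq.
  exists w; apply: (dom_mulIf q0).
  by rewrite -mulrA -ptq hv ptq -mulrA hw mulrA.
- have [v hv] := invariant_commute_l u Hq.
  have [w hw] := invariant_commute_r v Hp.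
  exists w; apply: (dom_mulIf q0).
  by rewrite -mulrA hv mulrA -ptq hw ptq mulrA.
Qed.

Lemma invariant_factor_colon1 a p :
  Defs.invariant p -> is_factor a p -> colon a 1 p.
Proof.
move=> Hp [r [s prs]] x; rewrite mulr1.
have s0 : s <> 0 by move=> s0; apply: Hp.1; rewrite prs s0 mulr0.
have [y hy] := invariant_commute_r x Hp.
have [w hw] := invariant_commute_r s Hp.
exists (y * w * r); apply: (dom_mulIf s0).
by rewrite hy -(mulrA y) hw prs !mulrA.
Qed.

End Domain.

Section PID.
Variables (R : nzRingType) (HR : is_PID R).
Implicit Types a c p y : R.

Let HD : is_domain R. Proof. by case: HR. Qed.

(* [I = Rc = dR], so [c] and [d] are associates on both sides, which makes [c] invariant. *)
Lemma PID_twosided_invariant (I : R -> Prop) :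
  is_twosided_ideal I -> (exists x, I x /\ x <> 0) ->
  exists q, Defs.invariant q /\ set_eq I (lmul_set q).
Proof.
case: HR => _ HL HRr [[I0 Iadd Ineg Ilm] Irm] [x0 [Ix0 x00]].
have [c Ec] := HL I (And4 I0 Iadd Ineg Ilm).
have [d Ed] := HRr I (And4 I0 Iadd Ineg Irm).
have c0 : c <> 0.
  by move=> c0; apply: x00; have [r ->] := (Ec x0).1 Ix0; rewrite c0 mulr0.
have Ic : I c by apply/Ec; exists 1; rewrite mul1r.
have Id : I d by apply/Ed; exists 1; rewrite mulr1.
have [u cu] := (Ed c).1 Ic.
have [v dv] := (Ec d).1 Id.
have [w cw] := (Ec (c * u)).1 (Irm u c Ic).
have vw : v * w = 1.
  by apply: (dom_mulIf HD c0); rewrite mul1r -mulrA -cw mulrA -dv -cu.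
have wv := dom_mulr1C HD vw.
exists c; split => //; split => // z; split=> [[y ->] | [t ->]].
- have [z' Hz'] := (Ed (v * y * c)).1 (Ilm (v * y) c Ic).
  exists z'; have e : w * (v * y * c) = w * (d * z') by rewrite Hz'.
  by move: e; rewrite dv !mulrA wv !mul1r.
- by apply/Ec; exact: Irm.
Qed.

Lemma PID_left_bezout a c :
  exists x u v y t, [/\ x = u * a + v * c, a = y * x & c = t * x].
Proof.
case: HR => _ HL _.
pose L z := exists u v, z = u * a + v * c.
have HL_ideal : is_left_ideal L.
  split.
  - by exists 0, 0; rewrite !mul0r addr0.
  - move=> z1 z2 [u1 [v1 ->]] [u2 [v2 ->]]; exists (u1 + u2), (v1 + v2).
    by rewrite !mulrDl addrACA.
  - by move=> z [u [v ->]]; exists (- u), (- v); rewrite !mulNr opprD.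
  - by move=> r z [u [v ->]]; exists (r * u), (r * v); rewrite mulrDr !mulrA.
have [x Ex] := HL L HL_ideal.
have [u [v xuv]] : L x by apply/Ex; exists 1; rewrite mul1r.
have [y ayx] : lmul_set x a by apply/Ex; exists 1, 0; rewrite mul1r mul0r addr0.
have [t ctx] : lmul_set x c by apply/Ex; exists 0, 1; rewrite mul1r mul0r add0r.
by exists x, u, v, y, t.
Qed.

Lemma sprime_bounded_left_factor a y :
  a <> 0 -> ~ is_unit a -> structurally_prime (lmul_set a) ->
  left_factor y a -> ~ is_unit y -> bounded y -> bounded a.
Proof.
move=> a0 au SP [x ayx] yu [I [[HI Irm] I0 IRy]].
have a1 := dom_lmul_set1 HD au.
exists I; split => // z Iz.
have x0 : x <> 0 by move=> x0; apply: a0; rewrite ayx x0 mulr0.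
have [] // := (structurally_primeP a1).1 SP z x.
  by move=> r; have [t ->] := IRy _ (Irm r z Iz); exists t; rewrite -mulrA -ayx.
move=> [t xta]; case: yu; apply: (dom_unit_r HD (x := t)).
by apply: (dom_mulIf HD x0); rewrite mul1r -mulrA -ayx -xta.
Qed.

Lemma sprime_bounded_inv_atom a :
  ~ is_unit a -> structurally_prime (lmul_set a) -> bounded a ->
  exists p, inv_atom p /\ is_factor a p.
Proof.
move=> au SP [I [[_ Irm] [w [Iw w0]] IRa]].
have a1 := dom_lmul_set1 HD au.
have E := (structurally_primeP a1).1 SP.
have w_colon : colon a 1 w by move=> r; rewrite mulr1; exact: IRa (Irm r w Iw).
have [q [Hq Eq]] :=
  PID_twosided_invariant (colon_twosided a 1) (ex_intro _ w (conj w_colon w0)).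
have q_colon : colon a 1 q by apply/Eq; exists 1; rewrite mul1r.
exists q; split; last by have [r hr] := q_colon 1; exists r, 1; rewrite !mulr1 in hr *.
split=> // [[q' [qq' _]] | b c Hb Hc qbc].
  by apply: a1; have := q_colon q'; rewrite mulr1 qq'.
have [|bRa|cRa] := E b c.
- move=> r; have [r' hr'] := invariant_commute_l r Hc.
  by rewrite -mulrA hr' mulrA -qbc; have := q_colon r'; rewrite mulr1.
- right; have [t btq] := (Eq b).1 (invariant_colon1 Hb bRa).
  have [t' tb] := invariant_commute_l t Hb.
  apply: (dom_unit_r HD (x := t')); apply: (dom_mulfI HD Hb.1).
  by rewrite mulr1 mulrA -tb -mulrA -qbc -btq.
- left; have [t ctq] := (Eq c).1 (invariant_colon1 Hc cRa).
  apply: (dom_unit_r HD (x := t)); apply: (dom_mulIf HD Hc.1).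
  by rewrite mul1r -mulrA -qbc -ctq.
Qed.

Lemma left_totally_unbounded_sprime a :
  left_totally_unbounded a -> structurally_prime (lmul_set a).
Proof.
move=> [a0 au LTU]; apply/(structurally_primeP (dom_lmul_set1 HD au)) => b c Jb.
case: (classic (lmul_set a c)) => [|cRa]; [by right | left].
apply: NNPP => bRa.
have [x [u [v [y [t [xuv ayx ctx]]]]]] := PID_left_bezout a c.
have x0 : x <> 0 by move=> x0; apply: a0; rewrite ayx x0 mulr0.
apply: (LTU y); first by exists x.
  move=> [y' [_ y'y]]; apply: cRa; exists (t * y').
  by rewrite ctx ayx mulrA -(mulrA t) y'y mulr1.
exists (colon a c); split; first exact: colon_twosided.
  by exists b; split => // b0; apply: bRa; exists 0; rewrite b0 mul0r.
move=> z Jz; have [s zvc] := Jz v.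
exists (z * u + s); apply: (dom_mulIf HD x0).
by rewrite -(mulrA _ y) -ayx mulrDl -zvc {1}xuv mulrDr !mulrA.
Qed.

Lemma inv_atom_factor_sprime a p :
  ~ is_unit a -> inv_atom p -> is_factor a p -> structurally_prime (lmul_set a).
Proof.
move=> au [Hp _ p_atom] ap; have a1 := dom_lmul_set1 HD au.
apply/(structurally_primeP a1) => b c Jb.
case: (classic (lmul_set a c)) => [|cRa]; [by right | left].
have p_colon := invariant_factor_colon1 HD Hp ap.
have Jp : colon a c p by move=> r; rewrite -mulrA; have := p_colon (r * c); rewrite mulr1.
have [q [Hq Eq]] :=
  PID_twosided_invariant (colon_twosided a c) (ex_intro _ p (conj Jp Hp.1)).
have [t ptq] := (Eq p).1 Jp.
have [[t' [_ t't]] | [q' [qq' _]]] :=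
  p_atom t q (invariant_ldivisor HD Hp Hq ptq) Hq ptq.
- have [u buq] := (Eq b).1 Jb.
  have [r pra] := p_colon 1; rewrite !mulr1 in pra.
  exists (u * t' * r).
  by rewrite buq -mulrA -pra ptq mulrA -(mulrA u) t't mulr1.
- have J1 : colon a c 1.
    by rewrite -qq'; apply: (colon_twosided a c).2; apply/Eq; exists 1; rewrite mul1r.
  by case: cRa; have := J1 1; rewrite !mul1r.
Qed.

End PID.

Theorem proposition3p13 (R : nzRingType) (HR : is_PID R) (a : R)
  (Ha0 : a <> 0) (Hau : ~ is_unit a) :
  structurally_prime (lmul_set a) <->
  (left_totally_unbounded a \/ exists p : R, inv_atom p /\ is_factor a p).
Proof.
split=> [SP | [LTU | [p [Hp ap]]]].
- case: (classic (exists p, inv_atom p /\ is_factor a p)) => [|no_atom]; [by right | left].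
  split=> // y ya yu yb; apply: no_atom.
  exact (sprime_bounded_inv_atom HR Hau SP
           (sprime_bounded_left_factor HR Ha0 Hau SP ya yu yb)).
- exact: (left_totally_unbounded_sprime HR LTU).
- exact: inv_atom_factor_sprime Hp ap.
Qed.
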